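(* Let $G$ be a countable multiplicatively written Abelian group, $\phi$ a height on $G$, $\alpha\in G$, and let $K\subseteq(0,\infty)$ be uncountable such that for every $t\in K$ the infimum in the definition of $\phi_t(\alpha)$ is attained. Then $K$ is uniform if and only if there exists $(\alpha_1,\alpha_2,\ldots)\in G^\infty$ such that $\alpha=\prod_{n=1}^\infty\alpha_n$ and $\phi_t(\alpha)=(\sum_{n=1}^\infty\phi(\alpha_n)^t)^{1/t}$ for all $t\in K$.
   Context: A height on $G$ is a map $\phi:G\to[0,\infty)$ with $\phi(e)=0$ and $\phi(\beta)=\phi(\beta^{-1})$. $G^\infty$ is the set of sequences in $G$ with all but finitely many terms equal to the identity. $\mathbb R^\infty$ is the set of finitely supported real sequences, $\|\mathbf x\|_t=(\sum_n|x_n|^t)^{1/t}$. $\phi_t(\alpha)=\inf\{(\sum_n\phi(\alpha_n)^t)^{1/t}:(\alpha_n)\in G^\infty,\ \prod_n\alpha_n=\alpha\}$, and the infimum is attained if some such sequence achieves it. A set $K\subseteq(0,\infty)$ is uniform if there exists $\mathbf x\in\mathbb R^\infty$ with $\phi_t(\alpha)=\|\mathbf x\|_t$ for all $t\in K$. *)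

From Stdlib Require Import Reals ClassicalEpsilon.
Open Scope R_scope.

(* t-th power for x >= 0, with the convention 0^t = 0 (t > 0).
   (Stdlib's Rpower 0 t = 1, hence the explicit case.) *)
Definition powt (x t : R) : R :=
  if Req_EM_T x 0 then 0 else Rpower x t.

Fixpoint sumR (f : nat -> R) (N : nat) : R :=
  match N with O => 0 | S n => sumR f n + f n end.

Fixpoint prodG {G : Type} (mul : G -> G -> G) (e : G) (a : nat -> G) (N : nat) : G :=
  match N with O => e | S n => mul (prodG mul e a n) (a n) end.

(* (a_n) in G^infty (terms equal e from N on) with product alpha *)
Definition fin_rep {G : Type} (mul : G -> G -> G) (e : G) (alpha : G)
  (a : nat -> G) (N : nat) : Prop :=
  (forall n, (N <= n)%nat -> a n = e) /\ prodG mul e a N = alpha.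

Definition phi_sum {G : Type} (phi : G -> R) (a : nat -> G) (N : nat) (t : R) : R :=
  powt (sumR (fun n => powt (phi (a n)) t) N) (1 / t).

Definition is_inf (S : R -> Prop) (v : R) : Prop :=
  (forall y, S y -> v <= y) /\ (forall w, (forall y, S y -> w <= y) -> w <= v).

Definition phi_t {G : Type} (mul : G -> G -> G) (e : G) (phi : G -> R)
  (t : R) (alpha : G) : R :=
  epsilon (inhabits 0%R)
    (is_inf (fun v => exists a N, fin_rep mul e alpha a N /\ v = phi_sum phi a N t)).

Definition inf_attained {G : Type} (mul : G -> G -> G) (e : G) (phi : G -> R)
  (t : R) (alpha : G) : Prop :=
  exists a N, fin_rep mul e alpha a N /\ phi_t mul e phi t alpha = phi_sum phi a N t.

(* ||x||_t for x in R^infty, x_n = 0 for n >= N *)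
Definition norm_t (x : nat -> R) (N : nat) (t : R) : R :=
  powt (sumR (fun n => powt (Rabs (x n)) t) N) (1 / t).

Definition uniform {G : Type} (mul : G -> G -> G) (e : G) (phi : G -> R)
  (alpha : G) (K : R -> Prop) : Prop :=
  exists (x : nat -> R) (N : nat), (forall n, (N <= n)%nat -> x n = 0) /\
    forall t, K t -> phi_t mul e phi t alpha = norm_t x N t.

From Stdlib Require Import Reals.
From Stdlib Require Import Lra Lia List Sorted Classical ClassicalEpsilon Cantor.
Import ListNotations.
Open Scope R_scope.

(* The backward direction is immediate: a single representation (alpha_n)
   attaining all the infima gives the witness x_n = phi(alpha_n).

   For the forward direction let x witness uniformity and suppose no single
   representation works for all t in K.  For t in K pick an attaining
   representation a^t.  The function
       s |-> sum_n phi(a^t_n)^s - sum_n |x_n|^s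
   is an exponential polynomial sum_i c_i exp(l_i s) which vanishes at t but
   not identically, so by Rolle's theorem it has only finitely many zeros.
   Hence t is determined by the (finite) list a^t, which ranges over a
   countable set since G is countable, and by its position among these
   finitely many zeros: K injects into nat, contradicting uncountability. *)

(** * Exponential polynomials and their zeros *)

Definition expsum (ps : list (R * R)) (t : R) : R :=
  fold_right (fun p acc => fst p * exp (snd p * t) + acc) 0 ps.

Definition expsum_deriv (ps : list (R * R)) : list (R * R) :=
  map (fun p => (fst p * snd p, snd p)) ps.

Definition expsum_shift (l : R) (ps : list (R * R)) : list (R * R) :=
  map (fun p => (fst p, snd p - l)) ps.

Lemma expsum_app ps1 ps2 t : expsum (ps1 ++ ps2) t = expsum ps1 t + expsum ps2 t.
Proof. induction ps1 as [|p ps1 IH]; simpl; [ring | rewrite IH; ring]. Qed.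

Lemma derivable_pt_lim_cexp c l t :
  derivable_pt_lim (fun t => c * exp (l * t)) t (c * l * exp (l * t)).
Proof.
  assert (Hlin : derivable_pt_lim (fun t => l * t) t l).
  { pose proof (derivable_pt_lim_scal id l t 1 (derivable_pt_lim_id t)) as H.
    rewrite Rmult_1_r in H. exact H. }
  pose proof (derivable_pt_lim_comp _ exp t l _ Hlin (derivable_pt_lim_exp _)) as Hcomp.
  replace (c * l * exp (l * t)) with (c * (exp (l * t) * l)) by ring.
  exact (derivable_pt_lim_scal _ c t _ Hcomp).
Qed.

Lemma derivable_pt_lim_expsum ps t :
  derivable_pt_lim (expsum ps) t (expsum (expsum_deriv ps) t).
Proof.
  induction ps as [|[c l] ps IH]; simpl.
  - apply derivable_pt_lim_const.
  - apply (derivable_pt_lim_plus (fun t => c * exp (l * t)) (expsum ps)); auto.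
    apply derivable_pt_lim_cexp.
Qed.

Lemma expsum_shift_spec l ps t :
  expsum (expsum_shift l ps) t = expsum ps t * exp (- l * t).
Proof.
  induction ps as [|[c m] ps IH]; [simpl; ring|].
  unfold expsum_shift in *. simpl in *. rewrite IH.
  replace ((m - l) * t) with (m * t + - l * t) by ring. rewrite exp_plus. ring.
Qed.

(* Dividing by the first exponential leaves a constant plus a shorter-spectrum
   exponential polynomial; this is the induction step of the zero count. *)
Lemma expsum_cons_normalize c l ps t :
  expsum ((c, l) :: ps) t * exp (- l * t) = c + expsum (expsum_shift l ps) t.
Proof.
  rewrite expsum_shift_spec. simpl. rewrite Rmult_plus_distr_r, Rmult_assoc, <- exp_plus.
  replace (l * t + - l * t) with 0 by ring. rewrite exp_0. ring.
Qed.

(* Rolle's theorem along a sorted list of zeros of g: between consecutive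
   zeros lies a zero of g', giving one fewer sorted zero of g'. *)
Lemma rolle_sorted (g dg : R -> R) (Hd : forall t, derivable_pt_lim g t (dg t)) :
  forall l x, StronglySorted Rlt (x :: l) -> Forall (fun t => g t = 0) (x :: l) ->
  exists l', length l' = length l /\ StronglySorted Rlt l' /\
    Forall (Rlt x) l' /\ Forall (fun t => dg t = 0) l'.
Proof.
  induction l as [|y l IH]; intros x Hsort Hzero.
  - exists []. repeat constructor.
  - inversion Hsort as [|? ? Hsort' Hx]; subst.
    inversion Hx as [|? ? Hxy Hxl]; subst.
    inversion Hzero as [|? ? Hgx Hzero']; subst.
    inversion Hzero' as [|? ? Hgy _]; subst.
    pose (pr := fun z (_ : x < z < y) => exist _ (dg z) (Hd z) : derivable_pt g z).
    destruct (Rolle g x y pr) as [c [Hc Hdc]]; [|exact Hxy|congruence|].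
    { intros z _. apply derivable_continuous_pt. exact (exist _ (dg z) (Hd z)). }
    simpl in Hdc.
    destruct (IH y Hsort' Hzero') as [l2 [Hlen [Hsort2 [Hgt Hzero2]]]].
    assert (Hcl2 : Forall (Rlt c) l2).
    { eapply Forall_impl; [|exact Hgt]. intros z Hz. lra. }
    exists (c :: l2). simpl. split; [lia|]. split; [constructor; auto|]. split.
    + constructor; [lra|]. eapply Forall_impl; [|exact Hcl2]. intros z Hz. lra.
    + constructor; auto.
Qed.

Lemma expsum_zero_count ps :
  (forall t, expsum ps t = 0) \/
  (forall l, StronglySorted Rlt l -> Forall (fun t => expsum ps t = 0) l ->
     (length l < length ps)%nat).
Proof.
  remember (length ps) as n eqn:Hlen. revert ps Hlen.
  induction n as [|n IHn]; intros ps Hlen.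
  - destruct ps; [left; reflexivity | discriminate].
  - destruct ps as [|[c l] ps]; [discriminate|]. simpl in Hlen.
    destruct (classic (forall t, expsum ((c, l) :: ps) t = 0)) as [Hall|Hnot];
      [left; exact Hall | right].
    intros zs Hsort Hzero. destruct zs as [|t0 zs]; [simpl; lia|].
    set (h := expsum (expsum_shift l ps)).
    set (g := fun t => c + h t).
    assert (Hgz : forall t, expsum ((c, l) :: ps) t = 0 -> g t = 0).
    { intros t Ht. unfold g, h. rewrite <- expsum_cons_normalize, Ht. ring. }
    assert (Hdg : forall t, derivable_pt_lim g t (0 + expsum (expsum_deriv (expsum_shift l ps)) t)).
    { intro t. apply (derivable_pt_lim_plus (fun _ => c) h);
        [apply derivable_pt_lim_const | apply derivable_pt_lim_expsum]. }
    assert (Hlen' : n = length (expsum_deriv (expsum_shift l ps))).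
    { unfold expsum_deriv, expsum_shift. rewrite !length_map. lia. }
    destruct (IHn _ Hlen') as [Hconst|Hbound].
    + (* g is constant and vanishes at t0, so the original sum vanishes everywhere *)
      exfalso. apply Hnot. intro t.
      assert (Hh : constant h).
      { apply (null_derivative_1 h (fun t => exist _ _ (derivable_pt_lim_expsum _ t))).
        intro s. apply Hconst. }
      assert (Hgt : g t = 0).
      { unfold g. rewrite (Hh t t0). apply Hgz. inversion Hzero; auto. }
      unfold g, h in Hgt. rewrite <- expsum_cons_normalize in Hgt.
      apply Rmult_integral in Hgt as [H|H]; [exact H|].
      pose proof (exp_pos (- l * t)). lra.
    + destruct (rolle_sorted g _ Hdg zs t0 Hsort) as [zs' [Hlen_zs [Hsort' [_ Hzero']]]].
      { eapply Forall_impl; [|exact Hzero]. exact Hgz. }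
      assert (Hlt : (length zs' < n)%nat).
      { apply Hbound; auto.
        eapply Forall_impl; [|exact Hzero']. intros a Ha. simpl in Ha. lra. }
      simpl. lia.
Qed.

Lemma insert_sorted z l : StronglySorted Rlt l -> ~ In z l ->
  exists l', StronglySorted Rlt l' /\ length l' = S (length l) /\
    forall y, In y l' <-> y = z \/ In y l.
Proof.
  induction l as [|x l IH]; intros Hsort Hnin.
  - exists [z]. split; [repeat constructor|]. split; [reflexivity|].
    intros y. simpl. intuition congruence.
  - inversion Hsort as [|? ? Hsort' Hx]; subst.
    destruct (Rlt_dec z x) as [Hzx|Hxz].
    + exists (z :: x :: l). split; [|split; [reflexivity|]].
      * constructor; auto. constructor; auto.
        eapply Forall_impl; [|exact Hx]. intros a Ha. lra.
      * intros y. simpl. intuition congruence.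
    + assert (Hxz' : x < z) by (assert (z <> x) by (intro; apply Hnin; left; auto); lra).
      destruct IH as [l' [Hsl' [Hlen Hin]]]; auto.
      { intro H. apply Hnin. right. exact H. }
      exists (x :: l'). split; [|split; [simpl; lia|]].
      * constructor; auto. apply Forall_forall. intros y Hy.
        apply Hin in Hy as [->|Hy]; [exact Hxz'|].
        rewrite Forall_forall in Hx. auto.
      * intros y. simpl. rewrite Hin. tauto.
Qed.

Lemma sorted_bound_finite (Z : R -> Prop) m :
  (forall l, StronglySorted Rlt l -> Forall Z l -> (length l < m)%nat) ->
  exists L, forall t, Z t -> In t L.
Proof.
  intros Hbound. apply NNPP. intro Hinf.
  assert (Hlong : forall k, exists l, StronglySorted Rlt l /\ Forall Z l /\ length l = k).
  { induction k as [|k [l [Hsort [HZ Hlen]]]].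
    - exists []. repeat constructor.
    - assert (Hout : exists t, Z t /\ ~ In t l).
      { apply NNPP. intro H. apply Hinf. exists l. intros t Zt.
        apply NNPP. intro Hn. apply H. exists t. auto. }
      destruct Hout as [t [Zt Hnin]].
      destruct (insert_sorted t l Hsort Hnin) as [l' [Hsort' [Hlen' Hin]]].
      exists l'. repeat split; [exact Hsort' | | lia].
      apply Forall_forall. intros y Hy. apply Hin in Hy as [->|Hy]; auto.
      rewrite Forall_forall in HZ. auto. }
  destruct (Hlong m) as [l [Hsort [HZ Hlen]]].
  specialize (Hbound l Hsort HZ). lia.
Qed.

Lemma expsum_zeros_finite ps :
  (forall t, expsum ps t = 0) \/ exists L, forall t, expsum ps t = 0 -> In t L.
Proof.
  destruct (expsum_zero_count ps) as [H|H]; [left; exact H | right].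
  exact (sorted_bound_finite _ _ H).
Qed.

(** * Power sums *)

Definition powsum (l : list R) (s : R) : R :=
  fold_right (fun b acc => powt b s + acc) 0 l.

(* The terms c * b^s = c * exp(s ln b), b <> 0, of c * powsum l. *)
Definition powsum_terms (c : R) (l : list R) : list (R * R) :=
  fold_right (fun b acc => (if Req_EM_T b 0 then [] else [(c, ln b)]) ++ acc) [] l.

Lemma expsum_powsum_terms c l s : expsum (powsum_terms c l) s = c * powsum l s.
Proof.
  induction l as [|b l IH]; simpl; [ring|].
  rewrite expsum_app, IH. unfold powt, Rpower.
  destruct (Req_EM_T b 0); simpl; [ring|].
  replace (ln b * s) with (s * ln b) by ring. ring.
Qed.

Lemma powsum_eq_or_finite l1 l2 :
  (forall s, powsum l1 s = powsum l2 s) \/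
  exists L, forall s, powsum l1 s = powsum l2 s -> In s L.
Proof.
  set (ps := powsum_terms 1 l1 ++ powsum_terms (-1) l2).
  assert (Hps : forall s, expsum ps s = powsum l1 s - powsum l2 s).
  { intro s. unfold ps. rewrite expsum_app, !expsum_powsum_terms. ring. }
  destruct (expsum_zeros_finite ps) as [H|[L HL]].
  - left. intro s. specialize (H s). rewrite Hps in H. lra.
  - right. exists L. intros s Hs. apply HL. rewrite Hps, Hs. ring.
Qed.

Lemma powsum_nonneg l s : 0 <= powsum l s.
Proof.
  induction l as [|b l IH]; simpl; [lra|].
  assert (0 <= powt b s).
  { unfold powt. destruct (Req_EM_T b 0); [lra | left; apply exp_pos]. }
  lra.
Qed.

(** * Countable unions of finite sets *)

Fixpoint encode_list {A : Type} (code : A -> nat) (l : list A) : nat :=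
  match l with
  | [] => O
  | x :: l' => S (to_nat (code x, encode_list code l'))
  end.

Lemma encode_list_inj {A : Type} (code : A -> nat) :
  (forall x y, code x = code y -> x = y) ->
  forall l1 l2, encode_list code l1 = encode_list code l2 -> l1 = l2.
Proof.
  intros Hcode. induction l1 as [|x l1 IH]; intros [|y l2]; cbn [encode_list];
    try discriminate; auto.
  intros H. apply Nat.succ_inj, to_nat_inj in H. injection H as Hxy Hl.
  f_equal; auto.
Qed.

Lemma countable_union_of_finite {T : Type} (code : T -> nat)
  (Hcode : forall x y, code x = code y -> x = y)
  (K : R -> Prop) (sel : R -> T) (Z : T -> R -> Prop)
  (Hsel : forall t, K t -> Z (sel t) t)
  (Hfin : forall t, K t -> exists L, forall s, Z (sel t) s -> In s L) :
  exists f : R -> nat, forall s t, K s -> K t -> f s = f t -> s = t.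
Proof.
  set (enum := fun c => epsilon (inhabits []) (fun L => forall s, Z c s -> In s L)).
  set (pos := fun t => epsilon (inhabits 0%nat) (fun n => nth n (enum (sel t)) 0 = t)).
  assert (Hpos : forall t, K t -> nth (pos t) (enum (sel t)) 0 = t).
  { intros t Kt. apply epsilon_spec.
    assert (Hin : In t (enum (sel t))).
    { apply (epsilon_spec (inhabits []) (fun L => forall s, Z (sel t) s -> In s L));
        auto. }
    destruct (In_nth _ _ 0 Hin) as [n [_ Hn]]. exists n. exact Hn. }
  exists (fun t => to_nat (code (sel t), pos t)).
  intros s t Ks Kt Heq. apply to_nat_inj in Heq. injection Heq as Hc Hp.
  apply Hcode in Hc.
  rewrite <- (Hpos s Ks), <- (Hpos t Kt), Hc, Hp. reflexivity.
Qed.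

Lemma choice_on {A B : Type} (b0 : B) (P : A -> Prop) (Q : A -> B -> Prop) :
  (forall a, P a -> exists b, Q a b) -> exists f : A -> B, forall a, P a -> Q a (f a).
Proof.
  intros H. exists (fun a => epsilon (inhabits b0) (Q a)).
  intros a Pa. apply epsilon_spec. auto.
Qed.

Lemma sumR_powsum (f : nat -> R) N s :
  sumR (fun n => powt (f n) s) N = powsum (map f (seq 0 N)) s.
Proof.
  induction N as [|N IH]; [reflexivity|].
  rewrite seq_S, map_app. simpl. rewrite IH.
  generalize (map f (seq 0 N)). intros l.
  induction l as [|b l IHl]; simpl; [ring | rewrite <- IHl; ring].
Qed.

Lemma phi_sum_powsum {G : Type} (phi : G -> R) a N t :
  phi_sum phi a N t = powt (powsum (map (fun n => phi (a n)) (seq 0 N)) t) (1 / t).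
Proof. unfold phi_sum. rewrite sumR_powsum. reflexivity. Qed.

Lemma norm_t_powsum x N t :
  norm_t x N t = powt (powsum (map (fun n => Rabs (x n)) (seq 0 N)) t) (1 / t).
Proof. unfold norm_t. rewrite sumR_powsum. reflexivity. Qed.

Lemma powt_inj u v s : 0 <= u -> 0 <= v -> s <> 0 -> powt u s = powt v s -> u = v.
Proof.
  intros Hu Hv Hs. unfold powt, Rpower.
  destruct (Req_EM_T u 0); destruct (Req_EM_T v 0); intros H.
  - congruence.
  - pose proof (exp_pos (s * ln v)). lra.
  - pose proof (exp_pos (s * ln u)). lra.
  - apply exp_inv, Rmult_eq_reg_l, ln_inv in H; auto; lra.
Qed.

Lemma root_powsum_inj l1 l2 t : 0 < t ->
  powt (powsum l1 t) (1 / t) = powt (powsum l2 t) (1 / t) -> powsum l1 t = powsum l2 t.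
Proof.
  intros Ht. apply powt_inj; try apply powsum_nonneg.
  unfold Rdiv. rewrite Rmult_1_l. apply Rinv_neq_0_compat. lra.
Qed.

Theorem lemma3p4
  (G : Type) (mul : G -> G -> G) (inv : G -> G) (e : G)
  (Hassoc : forall x y z, mul x (mul y z) = mul (mul x y) z)
  (Hcomm : forall x y, mul x y = mul y x)
  (Hid : forall x, mul e x = x)
  (Hinv : forall x, mul (inv x) x = e)
  (Hcountable : exists f : G -> nat, forall x y, f x = f y -> x = y)
  (phi : G -> R)
  (Hphi_nonneg : forall x, 0 <= phi x)
  (Hphi_e : phi e = 0)
  (Hphi_inv : forall x, phi (inv x) = phi x)
  (alpha : G) (K : R -> Prop)
  (HKpos : forall t, K t -> 0 < t)
  (HKuncount : ~ exists f : R -> nat,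
       forall s t, K s -> K t -> f s = f t -> s = t)
  (Hattained : forall t, K t -> inf_attained mul e phi t alpha) :
  uniform mul e phi alpha K <->
  exists (a : nat -> G) (N : nat), fin_rep mul e alpha a N /\
    forall t, K t -> phi_t mul e phi t alpha = phi_sum phi a N t.
Proof.
  split.
  - intros [x [Nx [_ Hu]]].
    set (xs := map (fun n => Rabs (x n)) (seq 0 Nx)).
    apply NNPP. intros Hnone. apply HKuncount.
    destruct Hcountable as [code Hcode].
    set (attains := fun t (p : (nat -> G) * nat) => fin_rep mul e alpha (fst p) (snd p) /\
           phi_t mul e phi t alpha = phi_sum phi (fst p) (snd p) t).
    destruct (choice_on (fun _ => e, 0%nat) K attains) as [rep Hrep].
    { intros t Kt. destruct (Hattained t Kt) as [a [N Ha]]. exists (a, N). exact Ha. }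
    set (terms := fun t => map (fst (rep t)) (seq 0 (snd (rep t)))).
    apply (countable_union_of_finite (encode_list code) (encode_list_inj code Hcode) K terms
             (fun c s => powsum (map phi c) s = powsum xs s)).
    + (* each t in K is a zero of its own power-sum difference *)
      intros t Kt. destruct (Hrep t Kt) as [_ Ht].
      rewrite Hu, phi_sum_powsum, norm_t_powsum in Ht by exact Kt.
      unfold terms. rewrite map_map. exact (root_powsum_inj _ _ _ (HKpos t Kt) (eq_sym Ht)).
    + (* that difference is not identically zero, else rep t would work for all of K *)
      intros t Kt.
      destruct (powsum_eq_or_finite (map phi (terms t)) xs) as [Hall|Hfin]; [|exact Hfin].
      exfalso. apply Hnone. exists (fst (rep t)), (snd (rep t)).
      split; [apply (Hrep t Kt)|]. intros s Ks.
      rewrite Hu, phi_sum_powsum, norm_t_powsum by exact Ks.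
      specialize (Hall s). unfold terms in Hall. rewrite map_map in Hall.
      rewrite Hall. reflexivity.
  - intros [a [N [[Hsupp Hprod] Hall]]].
    exists (fun n => phi (a n)), N. split.
    + intros n Hn. rewrite Hsupp by exact Hn. exact Hphi_e.
    + intros t Kt. rewrite Hall, phi_sum_powsum, norm_t_powsum by exact Kt.
      rewrite (map_ext _ _ (fun n => Rabs_pos_eq _ (Hphi_nonneg (a n)))). reflexivity.
Qed.
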